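(* (a) Let $(Q,\cdot)$ be a Ward quasigroup with $xx=e$ for all $x$. Put $x\star y=(e\cdot x)\cdot y$ and then $x\bullet y=(e\star x)\star y$. Then $x\bullet y=x\cdot y$ for all $x,y\in Q$. (b) Let $(Q,\star,e)$ be a double Ward quasigroup. Put $x\bullet y=(e\star x)\star y$ and then $x\diamond y=(e\bullet x)\bullet y$. Then $x\diamond y=x\star y$ for all $x,y\in Q$.
   Context: A quasigroup is a magma in which $ax=b$ and $ya=b$ have unique solutions for all $a,b$. A Ward quasigroup is a quasigroup satisfying $(xz)(yz)=xy$ for all $x,y,z$; it has an element $e$ with $xx=e$ for all $x$. A double Ward quasigroup $(Q,\star,e)$ is a quasigroup with an element $e$ such that $((e\star e)\star(x\star z))\star((e\star y)\star z)=x\star y$ for all $x,y,z$. *)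

Definition is_quasigroup {Q : Type} (op : Q -> Q -> Q) : Prop :=
  (forall a b : Q, exists! x : Q, op a x = b) /\
  (forall a b : Q, exists! y : Q, op y a = b).

Definition is_ward_quasigroup {Q : Type} (op : Q -> Q -> Q) : Prop :=
  is_quasigroup op /\
  (forall x y z : Q, op (op x z) (op y z) = op x y).

Definition is_double_ward_quasigroup {Q : Type} (star : Q -> Q -> Q) (e : Q) : Prop :=
  is_quasigroup star /\
  (forall x y z : Q,
     star (star (star e e) (star x z)) (star (star e y) z) = star x y).


(* In both parts the claim reduces to two facts: [e] is idempotent and
   left multiplication by [e] is an involution, since then
   [(e(e x)) y = x y].  In a Ward quasigroup [e (y z) = (z z)(y z) = z y],
   so [e] reverses every product and hence is an involution.  In a double
   Ward quasigroup, comparing two instances of the defining identity and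
   cancelling shows that [a b = e] forces [e b = a]; both facts follow from
   this by further instances and cancellation. *)

Section Quasigroup.

Variables (Q : Type) (op : Q -> Q -> Q).
Hypothesis Hq : is_quasigroup op.

Lemma quasigroup_cancel_l a x y : op a x = op a y -> x = y.
Proof.
  intros E. destruct Hq as [Hl _].
  destruct (Hl a (op a x)) as [u [_ Hu]].
  rewrite <- (Hu x eq_refl). apply Hu. symmetry. exact E.
Qed.

Lemma quasigroup_cancel_r a x y : op x a = op y a -> x = y.
Proof.
  intros E. destruct Hq as [_ Hr].
  destruct (Hr a (op x a)) as [u [_ Hu]].
  rewrite <- (Hu x eq_refl). apply Hu. symmetry. exact E.
Qed.

Lemma quasigroup_solve_l a b : exists x, op a x = b.
Proof. destruct Hq as [Hl _]. destruct (Hl a b) as [x [Hx _]]. eauto. Qed.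

Lemma quasigroup_solve_r a b : exists y, op y a = b.
Proof. destruct Hq as [_ Hr]. destruct (Hr a b) as [y [Hy _]]. eauto. Qed.

End Quasigroup.

Section Ward.

Variables (Q : Type) (dot : Q -> Q -> Q) (e : Q).
Hypothesis Hward : is_ward_quasigroup dot.
Hypothesis Hsq : forall x, dot x x = e.

Lemma ward_e_mul y z : dot e (dot y z) = dot z y.
Proof. rewrite <- (Hsq z). apply (proj2 Hward). Qed.

Lemma ward_e_mul_involutive x : dot e (dot e x) = x.
Proof.
  destruct (quasigroup_solve_l _ dot (proj1 Hward) x x) as [t Ht].
  rewrite <- Ht, (ward_e_mul x t), (ward_e_mul t x). reflexivity.
Qed.

End Ward.

Section DoubleWard.

Variables (Q : Type) (star : Q -> Q -> Q) (e : Q).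
Hypothesis Hdw : is_double_ward_quasigroup star e.

Let Hq := proj1 Hdw.
Let W := proj2 Hdw.

Lemma double_ward_mul_eq_e a b : star a b = e -> star e b = a.
Proof.
  intros Hab.
  destruct (quasigroup_solve_l _ star Hq e e) as [y0 Hy0].
  destruct (quasigroup_solve_l _ star Hq e (star a e)) as [w Hw].
  (* Both instances have the left factor [(e e)(a e)] and right side [e]. *)
  pose proof (W e y0 w) as W1. rewrite Hy0, Hw in W1.
  pose proof (W a b e) as W2. rewrite Hab in W2.
  pose proof (eq_trans W2 (eq_sym W1)) as W3.
  apply (quasigroup_cancel_l _ star Hq) in W3.
  apply (quasigroup_cancel_r _ star Hq) in W3.
  exact W3.
Qed.

Lemma double_ward_ee : star e e = e.
Proof.
  destruct (quasigroup_solve_l _ star Hq e e) as [y0 Hy0].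
  pose proof (W e y0 e) as W1. rewrite Hy0 in W1.
  apply double_ward_mul_eq_e in W1.
  apply (quasigroup_cancel_r _ star Hq (star e e)). symmetry. exact W1.
Qed.

Lemma double_ward_e_mul_e x : star (star e x) e = x.
Proof.
  pose proof (W e x e) as W1. rewrite !double_ward_ee in W1.
  exact (quasigroup_cancel_l _ star Hq _ _ _ W1).
Qed.

Lemma double_ward_e_mul_involutive x : star e (star e x) = x.
Proof.
  destruct (quasigroup_solve_r _ star Hq x e) as [a Ha].
  pose proof (W a e x) as W1. rewrite Ha, !double_ward_ee in W1.
  rewrite W1, <- (double_ward_mul_eq_e a x Ha).
  apply double_ward_e_mul_e.
Qed.

End DoubleWard.

Theorem theorem4p4 :
  (forall (Q : Type) (dot : Q -> Q -> Q) (e : Q),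
     is_ward_quasigroup dot ->
     (forall x : Q, dot x x = e) ->
     let star := fun x y => dot (dot e x) y in
     let bullet := fun x y => star (star e x) y in
     forall x y : Q, bullet x y = dot x y)
  /\
  (forall (Q : Type) (star : Q -> Q -> Q) (e : Q),
     is_double_ward_quasigroup star e ->
     let bullet := fun x y => star (star e x) y in
     let diamond := fun x y => bullet (bullet e x) y in
     forall x y : Q, diamond x y = star x y).
Proof.
  split.
  - intros Q dot e Hward Hsq star bullet x y. unfold bullet, star.
    rewrite Hsq, (ward_e_mul_involutive Q dot e Hward Hsq). reflexivity.
  - intros Q star e Hdw bullet diamond x y. unfold diamond, bullet.
    rewrite (double_ward_ee Q star e Hdw), (double_ward_e_mul_involutive Q star e Hdw).
    reflexivity.
Qed.
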